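(* Let $(\mathfrak C,\Delta,\varepsilon)$ be an $A$-coring and $(M,\mathfrak m)$ a $\mathfrak C$-cowreath with structure maps $\xi:\mathfrak C\otimes M\to\mathfrak C$ and $\delta:\mathfrak C\otimes M\to\mathfrak C\otimes M\otimes M$. Then the $A$-bimodule $\mathfrak C\otimes M$ is an $A$-coring with comultiplication and counit $$\Delta'=(\mathfrak C\otimes\mathfrak m\otimes M)\circ(\mathfrak C\otimes\delta)\circ(\Delta\otimes M),\qquad \varepsilon'=\varepsilon\circ\xi.$$ Moreover, $\xi:\mathfrak C\otimes M\to\mathfrak C$ is a morphism of $A$-corings.
   Context: Fix a commutative ring $\mathbb K$; rings are associative unital $\mathbb K$-algebras, bimodules unital and $\mathbb K$-central. $A$ is a ring, $\otimes=\otimes_A$, canonical unit isomorphisms are suppressed, identity maps are denoted by the objects. An $A$-coring $(\mathfrak C,\Delta,\varepsilon)$ is an $A$-bimodule with $A$-bilinear $\Delta:\mathfrak C\to\mathfrak C\otimes\mathfrak C$, $\varepsilon:\mathfrak C\to A$, coassociative and counital; a morphism of $A$-corings $\phi:\mathfrak D\to\mathfrak C$ is an $A$-bilinear map with $\varepsilon_{\mathfrak C}\phi=\varepsilon_{\mathfrak D}$ and $(\phi\otimes\phi)\Delta_{\mathfrak D}=\Delta_{\mathfrak C}\phi$. The category $\mathscr R_{(\mathfrak C:A)}$ has objects $(M,\mathfrak m)$, $M$ an $A$-bimodule, $\mathfrak m:\mathfrak C\otimes M\to M\otimes\mathfrak C$ $A$-bilinear with $(M\otimes\Delta)\mathfrak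 m=(\mathfrak m\otimes\mathfrak C)(\mathfrak C\otimes\mathfrak m)(\Delta\otimes M)$ and $(M\otimes\varepsilon)\mathfrak m=\varepsilon\otimes M$; $\mathfrak C\otimes M$ is then a $\mathfrak C$-bicomodule with left coaction $\Delta\otimes M$ and right coaction $(\mathfrak C\otimes\mathfrak m)(\Delta\otimes M)$. A $\mathfrak C$-cowreath is an object $(M,\mathfrak m)$ with $\mathfrak C$-bicolinear maps $\xi:\mathfrak C\otimes M\to\mathfrak C$, $\delta:\mathfrak C\otimes M\to\mathfrak C\otimes M\otimes M$ (the latter bicomodule with left coaction $\Delta\otimes M\otimes M$ and right coaction $(\mathfrak C\otimes M\otimes\mathfrak m)(\mathfrak C\otimes\mathfrak m\otimes M)(\Delta\otimes M\otimes M)$) such that $(\xi\otimes M)\delta=\mathfrak C\otimes M$, $(M\otimes\xi)(\mathfrak m\otimes M)\delta=\mathfrak m$, $(\mathfrak m\otimes M\otimes M)(\delta\otimes M)\delta=(M\otimes\delta)(\mathfrak m\otimes M)\delta$; equivalently, a comonoid in the monoidal category $\mathscr R_{(\mathfrak C:A)}$. *)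

From HB Require Import structures.
From mathcomp Require Import all_boot all_algebra.
From Stdlib Require Import ClassicalEpsilon.
Set Implicit Arguments.
Unset Strict Implicit.
Unset Printing Implicit Defensive.
Import GRing.Theory.
Local Open Scope ring_scope.

Section Bimodules.
Variable A : pzRingType.

Record bimod := Bimod {
  bsort :> Type;
  badd : bsort -> bsort -> bsort;
  bzero : bsort;
  bopp : bsort -> bsort;
  blact : A -> bsort -> bsort;
  bract : bsort -> A -> bsort }.

Record is_bimod (M : bimod) : Prop := IsBimod {
  baddA : forall x y z : M, badd x (badd y z) = badd (badd x y) z;
  baddC : forall x y : M, badd x y = badd y x;
  badd0 : forall x : M, badd (bzero M) x = x;
  baddN : forall x : M, badd (bopp x) x = bzero M;
  blactD : forall a (x y : M), blact a (badd x y) = badd (blact a x) (blact a y);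
  blactDl : forall a b (x : M), blact (a + b) x = badd (blact a x) (blact b x);
  blactM : forall a b (x : M), blact (a * b) x = blact a (blact b x);
  blact1 : forall x : M, blact 1 x = x;
  bractD : forall a (x y : M), bract (badd x y) a = badd (bract x a) (bract y a);
  bractDr : forall a b (x : M), bract x (a + b) = badd (bract x a) (bract x b);
  bractM : forall a b (x : M), bract x (a * b) = bract (bract x a) b;
  bract1 : forall x : M, bract x 1 = x;
  blract : forall a b (x : M), bract (blact a x) b = blact a (bract x b) }.

Record is_hom (M N : bimod) (f : M -> N) : Prop := IsHom {
  hom_add : forall x y, f (badd x y) = badd (f x) (f y);
  hom_lact : forall a x, f (blact a x) = blact a (f x);
  hom_ract : forall x a, f (bract x a) = bract (f x) a }.

Definition Areg : bimod :=
  @Bimod A +%R 0 -%R (fun a x => a * x) (fun x a => x * a).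

Definition bsum (M : bimod) (s : seq M) : M := foldr (@badd M) (bzero M) s.

(** Tensor product over A: formal finite sums of pairs, modulo the relation
    "same value under every A-balanced biadditive map into an abelian group". *)
Section Tensor.
Variables M N : bimod.

Definition balanced_biadd (G : zmodType) (b : M -> N -> G) : Prop :=
  [/\ forall m m' n, b (badd m m') n = b m n + b m' n,
      forall m n n', b m (badd n n') = b m n + b m n' &
      forall m a n, b (bract m a) n = b m (blact a n)].

Definition tequiv (s t : seq (M * N)) : Prop :=
  forall (G : zmodType) (b : M -> N -> G), balanced_biadd b ->
    \sum_(p <- s) b p.1 p.2 = \sum_(p <- t) b p.1 p.2.

Definition tens_carrier : Type :=
  {P : seq (M * N) -> Prop | exists s, P = tequiv s}.

Definition tcls (s : seq (M * N)) : tens_carrier :=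
  exist _ (tequiv s) (ex_intro _ s erefl).

Definition trepr (x : tens_carrier) : seq (M * N) :=
  proj1_sig (constructive_indefinite_description _ (proj2_sig x)).

Definition tens : bimod :=
  @Bimod tens_carrier
    (fun x y => tcls (trepr x ++ trepr y))
    (tcls [::])
    (fun x => tcls (map (fun p => (bopp p.1, p.2)) (trepr x)))
    (fun a x => tcls (map (fun p => (blact a p.1, p.2)) (trepr x)))
    (fun x a => tcls (map (fun p => (p.1, bract p.2 a)) (trepr x))).

End Tensor.

Definition tmap (M M' N N' : bimod) (f : M -> M') (g : N -> N')
  (x : tens M N) : tens M' N' :=
  tcls (map (fun p => (f p.1, g p.2)) (trepr x)).

Definition tassoc (M N P : bimod) (x : tens (tens M N) P) : tens M (tens N P) :=
  tcls (flatten (map (fun q =>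
     map (fun r => ((r.1 : M), (tcls [:: (r.2, q.2)] : tens N P))) (trepr q.1)) (trepr x))).

Definition tassocV (M N P : bimod) (x : tens M (tens N P)) : tens (tens M N) P :=
  tcls (flatten (map (fun q =>
     map (fun r => ((tcls [:: (q.1, r.1)] : tens M N), (r.2 : P))) (trepr q.2)) (trepr x))).

Definition lunit (M : bimod) (x : tens Areg M) : M :=
  bsum (map (fun p => blact p.1 p.2) (trepr x)).

Definition runit (M : bimod) (x : tens M Areg) : M :=
  bsum (map (fun p => bract p.1 p.2) (trepr x)).

Record is_coring (C : bimod) (D : C -> tens C C) (e : C -> Areg) : Prop :=
  IsCoring {
  coring_bimod : is_bimod C;
  coring_Dhom : is_hom D;
  coring_ehom : is_hom e;
  coring_coassoc : forall x, tassoc (tmap D (@id C) (D x)) = tmap (@id C) D (D x);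
  coring_counitl : forall x, lunit (tmap e (@id C) (D x)) = x;
  coring_counitr : forall x, runit (tmap (@id C) e (D x)) = x }.

Record is_coring_hom (Dc C : bimod) (DD : Dc -> tens Dc Dc) (eD : Dc -> Areg)
    (DC : C -> tens C C) (eC : C -> Areg) (phi : Dc -> C) : Prop :=
  IsCoringHom {
  chom_hom : is_hom phi;
  chom_counit : forall x, eC (phi x) = eD x;
  chom_comul : forall x, tmap phi phi (DD x) = DC (phi x) }.

Section Cowreath.
Variables (C : bimod) (D : C -> tens C C) (e : C -> Areg).
Variables (M : bimod) (m : tens C M -> tens M C).

Record is_Robj : Prop := IsRobj {
  robj_bimod : is_bimod M;
  robj_hom : is_hom m;
  robj_comul : forall x : tens C M,
    tmap (@id M) D (m x) =
    tassoc (tmap m (@id C) (tassocV (tmap (@id C) m (tassoc (tmap D (@id M) x)))));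
  robj_counit : forall x : tens C M,
    runit (tmap (@id M) e (m x)) = lunit (tmap e (@id M) x) }.

Definition lco (x : tens C M) : tens C (tens C M) := tassoc (tmap D (@id M) x).
Definition rco (x : tens C M) : tens (tens C M) C :=
  tassocV (tmap (@id C) m (tassoc (tmap D (@id M) x))).

Definition lco2 (y : tens C (tens M M)) : tens C (tens C (tens M M)) :=
  tassoc (tmap D (@id (tens M M)) y).
Definition rco2 (y : tens C (tens M M)) : tens (tens C (tens M M)) C :=
  tassocV (tmap (@id C) (@tassocV M M C)
   (tmap (@id C) (tmap (@id M) m)
    (tmap (@id C) (@tassoc M C M)
     (tmap (@id C) (tmap m (@id M))
      (tmap (@id C) (@tassocV C M M)
       (tassoc (tmap D (@id (tens M M)) y))))))).

Record is_cowreath (xi : tens C M -> C) (delta : tens C M -> tens C (tens M M))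
    : Prop := IsCowreath {
  cw_Robj : is_Robj;
  cw_xi_hom : is_hom xi;
  cw_delta_hom : is_hom delta;
  cw_xi_lcolin : forall x, D (xi x) = tmap (@id C) xi (lco x);
  cw_xi_rcolin : forall x, D (xi x) = tmap xi (@id C) (rco x);
  cw_delta_lcolin : forall x, tmap (@id C) delta (lco x) = lco2 (delta x);
  cw_delta_rcolin : forall x, tmap delta (@id C) (rco x) = rco2 (delta x);
  cw_counitl : forall x, tmap xi (@id M) (tassocV (delta x)) = x;
  cw_counitr : forall x,
    tmap (@id M) xi (tassoc (tmap m (@id M) (tassocV (delta x)))) = m x;
  cw_coassoc : forall x,
    tassoc (tmap m (@id (tens M M))
      (tassocV (tmap (@id C) (@tassoc M M M)
        (tassoc (tmap delta (@id M) (tassocV (delta x))))))) =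
    tmap (@id M) delta (tassoc (tmap m (@id M) (tassocV (delta x)))) }.

Definition cw_comul (delta : tens C M -> tens C (tens M M)) (x : tens C M)
    : tens (tens C M) (tens C M) :=
  tassocV (tmap (@id C) (@tassoc M C M)
   (tmap (@id C) (tmap m (@id M))
    (tmap (@id C) (@tassocV C M M)
     (tmap (@id C) delta (tassoc (tmap D (@id M) x)))))).

Definition cw_counit (xi : tens C M -> C) (x : tens C M) : Areg := e (xi x).

End Cowreath.
End Bimodules.

From HB Require Import structures.
From mathcomp Require Import all_boot all_algebra.
From mathcomp Require Import boolp.
From Stdlib Require Import ClassicalEpsilon.
Set Implicit Arguments.
Unset Strict Implicit.
Unset Printing Implicit Defensive.
Import GRing.Theory.
Local Open Scope ring_scope.

(* Everything is
   reduced to pure tensors: all maps involved are additive, so two of them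
   agree once they agree on elements [x ⊗ y].  The key identities are
   [(C ⊗ M ⊗ ξ) Δ' = right coaction of C ⊗ M] (by the right counit law of
   [δ]) and [(ξ ⊗ C ⊗ M) Δ' = Δ ⊗ M] (by right colinearity of [ξ] and the
   left counit law of [δ]).  Applying [ε] to the [C]-factor of these two
   identities gives the counit laws of [Δ'] (using those of [Δ] and of
   [(M, m)]); applying [ξ] to the first gives [(ξ ⊗ ξ) Δ' = Δ ξ].  For
   coassociativity, colinearity and coassociativity of [δ] bring both
   [(Δ' ⊗ C ⊗ M) Δ'] and [(C ⊗ M ⊗ Δ') Δ'] to a map applied to
   [(δ ⊗ M) δ]; the two remaining maps agree by coassociativity of [Δ] and
   the comultiplicativity of [m]. *)

Canonical tens.

Definition bimod_zmod (A : pzRingType) (M : bimod A) (HM : is_bimod M) : Type :=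
  bsort M.

Section BimodZmodule.
Variables (A : pzRingType) (M : bimod A) (HM : is_bimod M).
HB.instance Definition _ := gen_eqMixin (bimod_zmod HM).
HB.instance Definition _ := gen_choiceMixin (bimod_zmod HM).
HB.instance Definition _ := GRing.isZmodule.Build (bimod_zmod HM)
  (baddA HM) (baddC HM) (badd0 HM) (baddN HM).
End BimodZmodule.

Lemma addr_idem_eq0 (G : zmodType) (x : G) : x = x + x -> x = 0.
Proof. by move=> h; have := congr1 (fun z => z - x) h; rewrite subrr addrK. Qed.

Section TensorClasses.
Variable A : pzRingType.
Local Notation bimod := (bimod A).

Section Tequiv.
Variables X Y : bimod.
Implicit Types s t u : seq (X * Y).

Lemma tequiv_sym s t : tequiv s t -> tequiv t s.
Proof. by move=> h G b hb; rewrite (h G b hb). Qed.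

Lemma tequiv_trans s t u : tequiv s t -> tequiv t u -> tequiv s u.
Proof. by move=> h1 h2 G b hb; rewrite (h1 G b hb) (h2 G b hb). Qed.

Lemma tequiv_cat s1 s2 t1 t2 : tequiv s1 t1 -> tequiv s2 t2 ->
  tequiv (s1 ++ s2) (t1 ++ t2).
Proof. by move=> h1 h2 G b hb; rewrite !big_cat /= (h1 G b hb) (h2 G b hb). Qed.

Lemma trepr_tcls s : tequiv (trepr (tcls s)) s.
Proof.
rewrite /trepr /=; case: constructive_indefinite_description => r /= Hr.
by rewrite -Hr.
Qed.

Lemma tcls_trepr (x : tens X Y) : tcls (trepr x) = x.
Proof.
case: x => P HP; rewrite /trepr /tcls /=.
case: constructive_indefinite_description => r Hr /=; subst P.
exact: eq_exist.
Qed.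

Lemma tcls_eq s t : tequiv s t -> tcls s = tcls t.
Proof.
move=> h; apply: eq_exist; apply: funext => u; apply: propext.
by split=> h'; [exact: tequiv_trans (tequiv_sym h) h' | exact: tequiv_trans h h'].
Qed.

Lemma tens_rep (x : tens X Y) : exists s, x = tcls s.
Proof. by exists (trepr x); rewrite tcls_trepr. Qed.
End Tequiv.

(* The maps that may be tensored on the left (resp. right) of [⊗]: additive
   and compatible with the action that [⊗] balances. *)
Definition is_rmap (X X' : bimod) (f : X -> X') : Prop :=
  (forall x y, f (badd x y) = badd (f x) (f y)) /\
  forall x a, f (bract x a) = bract (f x) a.

Definition is_lmap (X X' : bimod) (f : X -> X') : Prop :=
  (forall x y, f (badd x y) = badd (f x) (f y)) /\
  forall a x, f (blact a x) = blact a (f x).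

Lemma balanced_comp (X Y X' Y' : bimod) (f : X -> X') (g : Y -> Y')
    (G : zmodType) (b : X' -> Y' -> G) :
  is_rmap f -> is_lmap g -> balanced_biadd b ->
  balanced_biadd (fun x y => b (f x) (g y)).
Proof.
move=> [fa fr] [ga gl] [b1 b2 b3]; split=> *.
- by rewrite fa b1.
- by rewrite ga b2.
- by rewrite fr gl b3.
Qed.

Lemma tequiv_map (X Y X' Y' : bimod) (f : X -> X') (g : Y -> Y') s t :
  is_rmap f -> is_lmap g -> tequiv s t ->
  tequiv (map (fun p => (f p.1, g p.2)) s) (map (fun p => (f p.1, g p.2)) t).
Proof.
move=> hf hg h G b hb; rewrite !big_map /=.
exact: (h G _ (balanced_comp hf hg hb)).
Qed.

Lemma tmapE (X Y X' Y' : bimod) (f : X -> X') (g : Y -> Y') s :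
  is_rmap f -> is_lmap g ->
  tmap f g (tcls s) = tcls (map (fun p => (f p.1, g p.2)) s).
Proof. by move=> hf hg; apply: tcls_eq; apply: tequiv_map => //; apply: trepr_tcls. Qed.

Lemma tens_addE (X Y : bimod) (s t : seq (X * Y)) :
  badd (tcls s) (tcls t) = tcls (s ++ t).
Proof. by apply: tcls_eq; apply: tequiv_cat; apply: trepr_tcls. Qed.

Lemma tens_zeroE (X Y : bimod) : bzero (tens X Y) = tcls [::].
Proof. by []. Qed.
End TensorClasses.

Section TensorBimodule.
Variable A : pzRingType.
Local Notation bimod := (bimod A).

Section BimodArith.
Variables (X : bimod) (HX : is_bimod X).
Local Notation Z := (bimod_zmod HX).

Lemma boppD (x y : X) : bopp (badd x y) = badd (bopp x) (bopp y).
Proof. exact: (@opprD Z x y). Qed.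

Lemma bract0 a : bract (bzero X) a = bzero X.
Proof.
have h := bractD HX a (bzero X) (bzero X); rewrite (badd0 HX) in h.
exact: (@addr_idem_eq0 Z _ h).
Qed.

Lemma blact0 a : blact a (bzero X) = bzero X.
Proof.
have h := blactD HX a (bzero X) (bzero X); rewrite (badd0 HX) in h.
exact: (@addr_idem_eq0 Z _ h).
Qed.

Lemma bractN (x : X) a : bract (bopp x) a = bopp (bract x a).
Proof.
have h : (bract (bopp x) a : Z) + bract x a = 0.
  by rewrite -[LHS](bractD HX) (baddN HX) bract0.
have e : (bract (bopp x) a : Z) = - (bract x a : Z) by apply/eqP; rewrite -addr_eq0 h.
exact: e.
Qed.

Lemma rmap_opp : is_rmap (@bopp _ X).
Proof. by split=> *; [exact: boppD | rewrite bractN]. Qed.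

Lemma rmap_lact a : is_rmap (blact a : X -> X).
Proof. by split=> *; [exact: (blactD HX) | rewrite (blract HX)]. Qed.

Lemma lmap_ract a : is_lmap (fun x : X => bract x a).
Proof. by split=> *; [exact: (bractD HX) | rewrite (blract HX)]. Qed.
End BimodArith.

Lemma rmap_id (X : bimod) : is_rmap (@id X). Proof. by []. Qed.
Lemma lmap_id (X : bimod) : is_lmap (@id X). Proof. by []. Qed.
Lemma hom_id (X : bimod) : is_hom (@id X). Proof. by []. Qed.
Lemma hom_rmap (X Y : bimod) (f : X -> Y) : is_hom f -> is_rmap f.
Proof. by case. Qed.
Lemma hom_lmap (X Y : bimod) (f : X -> Y) : is_hom f -> is_lmap f.
Proof. by case. Qed.

Lemma balNl (X Y : bimod) (HX : is_bimod X) (G : zmodType) (b : X -> Y -> G) :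
  balanced_biadd b -> forall x y, b (bopp x) y = - b x y.
Proof.
case=> h1 _ _ x y; apply/eqP; rewrite -addr_eq0 -h1 (baddN HX); apply/eqP.
by apply: addr_idem_eq0; rewrite -h1 (badd0 HX).
Qed.

Section TensorOps.
Variables (X Y : bimod) (HX : is_bimod X) (HY : is_bimod Y).
Implicit Types s : seq (X * Y).

Lemma tens_oppE s : bopp (tcls s) = tcls (map (fun p => (bopp p.1, p.2)) s).
Proof. exact: (tmapE s (rmap_opp HX) (lmap_id _)). Qed.

Lemma tens_lactE a s :
  blact a (tcls s) = tcls (map (fun p => (blact a p.1, p.2)) s).
Proof. exact: (tmapE s (rmap_lact HX a) (lmap_id _)). Qed.

Lemma tens_ractE a s :
  bract (tcls s) a = tcls (map (fun p => (p.1, bract p.2 a)) s).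
Proof. exact: (tmapE s (rmap_id _) (lmap_ract HY a)). Qed.

Lemma tens_bimod : is_bimod (tens X Y).
Proof.
split.
- move=> x y z; case: (tens_rep x) => sx ->; case: (tens_rep y) => sy ->.
  by case: (tens_rep z) => sz ->; rewrite !tens_addE catA.
- move=> x y; case: (tens_rep x) => sx ->; case: (tens_rep y) => sy ->.
  by rewrite !tens_addE; apply: tcls_eq => G b hb; rewrite !big_cat /= addrC.
- by move=> x; case: (tens_rep x) => sx ->; rewrite tens_zeroE tens_addE.
- move=> x; case: (tens_rep x) => sx ->; rewrite tens_oppE tens_zeroE tens_addE.
  apply: tcls_eq => G b hb; rewrite big_cat big_map big_nil /= -big_split /=.
  by apply: big1 => p _; rewrite (balNl HX hb) addNr.
- move=> a x y; case: (tens_rep x) => sx ->; case: (tens_rep y) => sy ->.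
  by rewrite (tens_lactE a sx) (tens_lactE a sy) !tens_addE tens_lactE map_cat.
- move=> a c x; case: (tens_rep x) => sx ->; rewrite !tens_lactE tens_addE.
  apply: tcls_eq => G b [h1 h2 h3]; rewrite big_cat !big_map /= -big_split /=.
  by apply: eq_bigr => p _; rewrite (blactDl HX) h1.
- move=> a c x; case: (tens_rep x) => sx ->; rewrite !tens_lactE -map_comp.
  by apply: congr1; apply: eq_map => p /=; rewrite (blactM HX).
- move=> x; case: (tens_rep x) => sx ->; rewrite !tens_lactE.
  by congr tcls; rewrite -[RHS]map_id; apply: eq_map => -[p q] /=; rewrite (blact1 HX).
- move=> a x y; case: (tens_rep x) => sx ->; case: (tens_rep y) => sy ->.
  by rewrite (tens_ractE a sx) (tens_ractE a sy) !tens_addE tens_ractE map_cat.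
- move=> a c x; case: (tens_rep x) => sx ->; rewrite !tens_ractE tens_addE.
  apply: tcls_eq => G b [h1 h2 h3]; rewrite big_cat !big_map /= -big_split /=.
  by apply: eq_bigr => p _; rewrite (bractDr HY) h2.
- move=> a c x; case: (tens_rep x) => sx ->; rewrite !tens_ractE -map_comp.
  by apply: congr1; apply: eq_map => p /=; rewrite (bractM HY).
- move=> x; case: (tens_rep x) => sx ->; rewrite !tens_ractE.
  by congr tcls; rewrite -[RHS]map_id; apply: eq_map => -[p q] /=; rewrite (bract1 HY).
- move=> a c x; case: (tens_rep x) => sx ->.
  by rewrite tens_lactE !tens_ractE tens_lactE -!map_comp.
Qed.
End TensorOps.
End TensorBimodule.

Section PureTensors.
Variable A : pzRingType.
Local Notation bimod := (bimod A).

Definition tpure (X Y : bimod) (x : X) (y : Y) : tens X Y := tcls [:: (x, y)].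

Lemma tmap_tpure (X Y X' Y' : bimod) (f : X -> X') (g : Y -> Y') x y :
  is_rmap f -> is_lmap g -> tmap f g (tpure x y) = tpure (f x) (g y).
Proof. by move=> hf hg; rewrite /tpure tmapE. Qed.

Lemma tpureDl (X Y : bimod) (x x' : X) (y : Y) :
  tpure (badd x x') y = badd (tpure x y) (tpure x' y).
Proof.
rewrite /tpure tens_addE; apply: tcls_eq => G b [h1 h2 h3].
by rewrite !big_cons !big_nil /= h1 !addr0.
Qed.

Lemma tpureDr (X Y : bimod) (x : X) (y y' : Y) :
  tpure x (badd y y') = badd (tpure x y) (tpure x y').
Proof.
rewrite /tpure tens_addE; apply: tcls_eq => G b [h1 h2 h3].
by rewrite !big_cons !big_nil /= h2 !addr0.
Qed.

Lemma tpure_bal (X Y : bimod) (x : X) a (y : Y) :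
  tpure (bract x a) y = tpure x (blact a y).
Proof.
by rewrite /tpure; apply: tcls_eq => G b [h1 h2 h3]; rewrite !big_cons !big_nil /= h3.
Qed.

Lemma blact_tpure (X Y : bimod) (HX : is_bimod X) a (x : X) (y : Y) :
  blact a (tpure x y) = tpure (blact a x) y.
Proof. by rewrite /tpure (tens_lactE HX). Qed.

Lemma bract_tpure (X Y : bimod) (HY : is_bimod Y) a (x : X) (y : Y) :
  bract (tpure x y) a = tpure x (bract y a).
Proof. by rewrite /tpure (tens_ractE HY). Qed.

Lemma rmap_tpure (X Y : bimod) (HY : is_bimod Y) (x : X) :
  is_rmap (fun y : Y => tpure x y).
Proof. by split=> *; [exact: tpureDr | rewrite bract_tpure]. Qed.

Lemma lmap_tpure (X Y : bimod) (HX : is_bimod X) (y : Y) :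
  is_lmap (fun x : X => tpure x y).
Proof. by split=> *; [exact: tpureDl | rewrite blact_tpure]. Qed.

Lemma bsum_tpure (X Y : bimod) (s : seq (X * Y)) :
  bsum (map (fun p => tpure p.1 p.2) s) = tcls s.
Proof.
elim: s => [|[x y] s IH] //.
have -> : bsum (map (fun p => tpure p.1 p.2) ((x, y) :: s)) =
  badd (tpure x y) (bsum (map (fun p => tpure p.1 p.2) s)) by [].
by rewrite IH /tpure tens_addE.
Qed.

Definition badditive (X Y : bimod) (F : X -> Y) : Prop :=
  forall u v, F (badd u v) = badd (F u) (F v).

Lemma tens_ext (X Y Z : bimod) (HZ : is_bimod Z) (F G : tens X Y -> Z) :
  badditive F -> badditive G -> (forall x y, F (tpure x y) = G (tpure x y)) ->
  forall u, F u = G u.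
Proof.
move=> hF hG hpure.
have F0 (H : tens X Y -> Z) : badditive H -> H (bzero _) = bzero Z.
  move=> hH; have := hH (bzero _) (bzero _); rewrite tens_zeroE tens_addE /=.
  exact: (@addr_idem_eq0 (bimod_zmod HZ)).
move=> u; case: (tens_rep u) => s ->; rewrite -bsum_tpure.
elim: s => [|p s IH]; first by rewrite /= (F0 _ hF) (F0 _ hG).
have -> : bsum (map (fun p => tpure p.1 p.2) (p :: s)) =
  badd (tpure p.1 p.2) (bsum (map (fun p => tpure p.1 p.2) s)) by [].
by rewrite hF hG IH hpure.
Qed.

Lemma tmap_badditive (X Y X' Y' : bimod) (f : X -> X') (g : Y -> Y') :
  is_rmap f -> is_lmap g -> badditive (tmap f g).
Proof.
move=> hf hg u v; case: (tens_rep u) => su ->; case: (tens_rep v) => sv ->.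
by rewrite tens_addE !tmapE // tens_addE map_cat.
Qed.

Lemma tmap_blact (X Y X' Y' : bimod) (HX : is_bimod X) (HX' : is_bimod X')
    (f : X -> X') (g : Y -> Y') a u :
  is_rmap f -> is_lmap g -> (forall x, f (blact a x) = blact a (f x)) ->
  tmap f g (blact a u) = blact a (tmap f g u).
Proof.
move=> hf hg hl; case: (tens_rep u) => s ->.
rewrite (tens_lactE HX) !tmapE // (tens_lactE HX') -!map_comp.
by apply: congr1; apply: eq_map => p /=; rewrite hl.
Qed.

Lemma tmap_bract (X Y X' Y' : bimod) (HY : is_bimod Y) (HY' : is_bimod Y')
    (f : X -> X') (g : Y -> Y') a u :
  is_rmap f -> is_lmap g -> (forall y, g (bract y a) = bract (g y) a) ->
  tmap f g (bract u a) = bract (tmap f g u) a.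
Proof.
move=> hf hg hr; case: (tens_rep u) => s ->.
rewrite (tens_ractE HY) !tmapE // (tens_ractE HY') -!map_comp.
by apply: congr1; apply: eq_map => p /=; rewrite hr.
Qed.

Lemma tmap_hom (X Y X' Y' : bimod) (HX : is_bimod X) (HX' : is_bimod X')
    (HY : is_bimod Y) (HY' : is_bimod Y') (f : X -> X') (g : Y -> Y') :
  is_hom f -> is_hom g -> is_hom (tmap f g).
Proof.
move=> hf hg; have rf := hom_rmap hf; have lg := hom_lmap hg.
split.
- exact: tmap_badditive.
- by move=> a x; apply: tmap_blact => // ?; exact: (hom_lact hf).
- by move=> x a; apply: tmap_bract => // ?; exact: (hom_ract hg).
Qed.

Lemma lmap_tmap (X Y X' Y' : bimod) (HX : is_bimod X) (HX' : is_bimod X')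
    (f : X -> X') (g : Y -> Y') :
  is_hom f -> is_lmap g -> is_lmap (tmap f g).
Proof.
move=> hf hg; have rf := hom_rmap hf; split; first exact: tmap_badditive.
by move=> a u; apply: tmap_blact => // ?; exact: (hom_lact hf).
Qed.

Lemma rmap_tmap (X Y X' Y' : bimod) (HY : is_bimod Y) (HY' : is_bimod Y')
    (f : X -> X') (g : Y -> Y') :
  is_rmap f -> is_hom g -> is_rmap (tmap f g).
Proof.
move=> hf hg; have lg := hom_lmap hg; split; first exact: tmap_badditive.
by move=> u a; apply: tmap_bract => // ?; exact: (hom_ract hg).
Qed.

Lemma rmap_comp (X Y Z : bimod) (f : X -> Y) (g : Y -> Z) :
  is_rmap f -> is_rmap g -> is_rmap (g \o f).
Proof. by move=> [f1 f2] [g1 g2]; split=> * /=; rewrite ?f1 ?g1 ?f2 ?g2. Qed.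

Lemma lmap_comp (X Y Z : bimod) (f : X -> Y) (g : Y -> Z) :
  is_lmap f -> is_lmap g -> is_lmap (g \o f).
Proof. by move=> [f1 f2] [g1 g2]; split=> * /=; rewrite ?f1 ?g1 ?f2 ?g2. Qed.

Lemma hom_comp (X Y Z : bimod) (f : X -> Y) (g : Y -> Z) :
  is_hom f -> is_hom g -> is_hom (g \o f).
Proof.
by move=> [f1 f2 f3] [g1 g2 g3]; split=> * /=; rewrite ?f1 ?g1 ?f2 ?g2 ?f3 ?g3.
Qed.

Lemma tmap_comp (X Y X' Y' X'' Y'' : bimod) (f : X -> X') (g : Y -> Y')
    (f' : X' -> X'') (g' : Y' -> Y'') u :
  is_rmap f -> is_lmap g -> is_rmap f' -> is_lmap g' ->
  tmap f' g' (tmap f g u) = tmap (f' \o f) (g' \o g) u.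
Proof.
move=> hf hg hf' hg'; case: (tens_rep u) => s ->.
rewrite (tmapE _ hf hg) (tmapE _ hf' hg').
by rewrite (tmapE _ (rmap_comp hf hf') (lmap_comp hg hg')) -map_comp.
Qed.

Lemma tmap_compl (X X' X'' Y : bimod) (f : X -> X') (f' : X' -> X'')
    (u : tens X Y) :
  is_rmap f -> is_rmap f' -> tmap f' id (tmap f id u) = tmap (f' \o f) id u.
Proof. by move=> hf hf'; rewrite tmap_comp //; exact: lmap_id. Qed.

Lemma tmap_compr (X Y Y' Y'' : bimod) (g : Y -> Y') (g' : Y' -> Y'')
    (u : tens X Y) :
  is_lmap g -> is_lmap g' -> tmap id g' (tmap id g u) = tmap id (g' \o g) u.
Proof. by move=> hg hg'; rewrite tmap_comp //; exact: rmap_id. Qed.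

Lemma tmap_split (X X' Y Y' : bimod) (f : X -> X') (g : Y -> Y') (u : tens X Y) :
  is_rmap f -> is_lmap g -> tmap f g u = tmap f id (tmap id g u).
Proof. by move=> hf hg; rewrite tmap_comp. Qed.

Lemma tmap_id (X Y : bimod) (u : tens X Y) : tmap id id u = u.
Proof.
rewrite -[RHS]tcls_trepr /tmap; congr tcls.
by elim: (trepr u) => //= -[x y] s ->.
Qed.

Lemma tmap_ext (X Y X' Y' : bimod) (f f' : X -> X') (g g' : Y -> Y') u :
  f =1 f' -> g =1 g' -> tmap f g u = tmap f' g' u.
Proof. by move=> hf hg; rewrite /tmap; congr tcls; apply: eq_map => p; rewrite hf hg. Qed.

Lemma tmap_extl (X Y X' Y' : bimod) (f f' : X -> X') (g : Y -> Y') u :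
  f =1 f' -> tmap f g u = tmap f' g u.
Proof. by move=> hf; apply: tmap_ext. Qed.

Lemma tmap_extr (X Y X' Y' : bimod) (f : X -> X') (g g' : Y -> Y') u :
  g =1 g' -> tmap f g u = tmap f g' u.
Proof. by move=> hg; apply: tmap_ext. Qed.
End PureTensors.

Section Associator.
Variable A : pzRingType.
Local Notation bimod := (bimod A).
Variables (X Y Z : bimod) (HX : is_bimod X) (HY : is_bimod Y) (HZ : is_bimod Z).

Section Pairings.
Variables (G : zmodType).

Lemma balanced_tpure_r (b : X -> tens Y Z -> G) (z : Z) :
  balanced_biadd b -> balanced_biadd (fun x (y : Y) => b x (tpure y z)).
Proof.
case=> h1 h2 h3; split=> *; first by rewrite h1.
  by rewrite tpureDl h2.
by rewrite h3 blact_tpure.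
Qed.

Lemma balanced_tpure_l (b : tens X Y -> Z -> G) (x : X) :
  balanced_biadd b -> balanced_biadd (fun (y : Y) (z : Z) => b (tpure x y) z).
Proof.
case=> h1 h2 h3; split=> *; first by rewrite tpureDr h1.
  by rewrite h2.
by rewrite -h3 bract_tpure.
Qed.

(* A balanced map out of [X ⊗ (Y ⊗ Z)] induces one out of [(X ⊗ Y) ⊗ Z]
   and conversely; these are the pairings that make [tassoc] and [tassocV]
   well defined on representatives. *)
Definition tassoc_pairing (b : X -> tens Y Z -> G) (u : tens X Y) (z : Z) : G :=
  \sum_(r <- trepr u) b r.1 (tpure r.2 z).

Definition tassocV_pairing (b : tens X Y -> Z -> G) (x : X) (w : tens Y Z) : G :=
  \sum_(r <- trepr w) b (tpure x r.1) r.2.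

Lemma balanced_tassoc_pairing (b : X -> tens Y Z -> G) :
  balanced_biadd b -> balanced_biadd (tassoc_pairing b).
Proof.
move=> hb; have [h1 h2 h3] := hb; split; rewrite /tassoc_pairing.
- move=> u u' z; rewrite -big_cat.
  exact: (trepr_tcls (trepr u ++ trepr u') (balanced_tpure_r z hb)).
- by move=> *; rewrite -big_split; apply: eq_bigr => r _; rewrite tpureDr h2.
- move=> u a z.
  have := trepr_tcls (map (fun p => (p.1, bract p.2 a)) (trepr u)) (balanced_tpure_r z hb).
  by rewrite big_map => ->; apply: eq_bigr => r _ /=; rewrite tpure_bal.
Qed.

Lemma balanced_tassocV_pairing (b : tens X Y -> Z -> G) :
  balanced_biadd b -> balanced_biadd (tassocV_pairing b).
Proof.
move=> hb; have [h1 h2 h3] := hb; split; rewrite /tassocV_pairing.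
- by move=> *; rewrite -big_split; apply: eq_bigr => r _; rewrite tpureDl h1.
- move=> x w w'; rewrite -big_cat.
  exact: (trepr_tcls (trepr w ++ trepr w') (balanced_tpure_l x hb)).
- move=> x a w.
  have := trepr_tcls (map (fun p => (blact a p.1, p.2)) (trepr w)) (balanced_tpure_l x hb).
  by rewrite big_map /= => ->; apply: eq_bigr => r _; rewrite tpure_bal.
Qed.
End Pairings.

Lemma tassocE (s : seq (tens X Y * Z)) :
  tassoc (tcls s) =
  tcls (flatten (map (fun q => map (fun r => (r.1, tpure r.2 q.2)) (trepr q.1)) s)).
Proof.
apply: tcls_eq => G b hb; rewrite !big_flatten /= !big_map.
have := trepr_tcls s (balanced_tassoc_pairing hb); rewrite /tassoc_pairing => h.
rewrite (eq_bigr (fun q => \sum_(r <- trepr q.1) b r.1 (tpure r.2 q.2))); last by move=> q _; rewrite big_map.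
by rewrite h; apply: eq_bigr => q _; rewrite big_map.
Qed.

Lemma tassocVE (s : seq (X * tens Y Z)) :
  tassocV (tcls s) =
  tcls (flatten (map (fun q => map (fun r => (tpure q.1 r.1, r.2)) (trepr q.2)) s)).
Proof.
apply: tcls_eq => G b hb; rewrite !big_flatten /= !big_map.
have := trepr_tcls s (balanced_tassocV_pairing hb); rewrite /tassocV_pairing => h.
rewrite (eq_bigr (fun q => \sum_(r <- trepr q.2) b (tpure q.1 r.1) r.2)); last by move=> q _; rewrite big_map.
by rewrite h; apply: eq_bigr => q _; rewrite big_map.
Qed.

Lemma tassoc_badditive : badditive (@tassoc _ X Y Z).
Proof.
move=> u v; case: (tens_rep u) => su ->; case: (tens_rep v) => sv ->.
by rewrite tens_addE !tassocE tens_addE map_cat flatten_cat.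
Qed.

Lemma tassocV_badditive : badditive (@tassocV _ X Y Z).
Proof.
move=> u v; case: (tens_rep u) => su ->; case: (tens_rep v) => sv ->.
by rewrite tens_addE !tassocVE tens_addE map_cat flatten_cat.
Qed.

Lemma tassoc_tpure (w : tens X Y) (z : Z) :
  tassoc (tpure w z) = tmap id (fun y => tpure y z) w.
Proof. by rewrite /tpure tassocE /= cats0. Qed.

Lemma tassocV_tpure (x : X) (w : tens Y Z) :
  tassocV (tpure x w) = tmap (fun y => tpure x y) id w.
Proof. by rewrite /tpure tassocVE /= cats0. Qed.

Lemma tassoc_tpure2 (x : X) (y : Y) (z : Z) :
  tassoc (tpure (tpure x y) z) = tpure x (tpure y z).
Proof. by rewrite tassoc_tpure tmap_tpure //; exact: lmap_tpure. Qed.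

Lemma tassocV_tpure2 (x : X) (y : Y) (z : Z) :
  tassocV (tpure x (tpure y z)) = tpure (tpure x y) z.
Proof. by rewrite tassocV_tpure tmap_tpure //; exact: rmap_tpure. Qed.
End Associator.

Section Unitors.
Variable A : pzRingType.
Variables (N : bimod A) (HN : is_bimod N).
Local Notation Z := (bimod_zmod HN).

Lemma Areg_bimod : is_bimod (Areg A).
Proof.
split=> *; rewrite /= ?addrA ?mulrA //.
- exact: addrC.
- exact: add0r.
- exact: addNr.
- exact: mulrDr.
- exact: mulrDl.
- exact: mul1r.
- exact: mulrDl.
- exact: mulrDr.
- exact: mulr1.
Qed.

Lemma bsum_sum (T : Type) (f : T -> N) s : bsum (map f s) = \sum_(p <- s) (f p : Z).
Proof. by elim: s => [|p s IH]; rewrite ?big_nil // big_cons -IH. Qed.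

Lemma bsum_cat (s t : seq N) : bsum (s ++ t) = badd (bsum s) (bsum t).
Proof.
have := bsum_sum id (s ++ t); rewrite map_id big_cat /= => ->.
by rewrite -!(bsum_sum id) !map_id.
Qed.

Lemma balanced_lact : balanced_biadd (fun (a : Areg A) (v : N) => (blact a v : Z)).
Proof. by split=> *; [exact: (blactDl HN) | exact: (blactD HN) | exact: (blactM HN)]. Qed.

Lemma balanced_ract : balanced_biadd (fun (v : N) (a : Areg A) => (bract v a : Z)).
Proof.
by split=> *; [exact: (bractD HN) | exact: (bractDr HN) | exact: (esym (bractM HN _ _ _))].
Qed.

Lemma lunitE (s : seq (Areg A * N)) :
  lunit (tcls s) = bsum (map (fun p => blact p.1 p.2) s).
Proof. by rewrite /lunit !bsum_sum; exact: (trepr_tcls s balanced_lact). Qed.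

Lemma runitE (s : seq (N * Areg A)) :
  runit (tcls s) = bsum (map (fun p => bract p.1 p.2) s).
Proof. by rewrite /runit !bsum_sum; exact: (trepr_tcls s balanced_ract). Qed.

Lemma lunit_tpure a (v : N) : lunit (tpure (a : Areg A) v) = blact a v.
Proof. by rewrite /tpure lunitE /=; exact: (@addr0 Z). Qed.

Lemma runit_tpure a (v : N) : runit (tpure v (a : Areg A)) = bract v a.
Proof. by rewrite /tpure runitE /=; exact: (@addr0 Z). Qed.

Lemma lunitD (u v : tens (Areg A) N) : lunit (badd u v) = badd (lunit u) (lunit v).
Proof.
case: (tens_rep u) => su ->; case: (tens_rep v) => sv ->.
by rewrite tens_addE !lunitE map_cat bsum_cat.
Qed.

Lemma runitD (u v : tens N (Areg A)) : runit (badd u v) = badd (runit u) (runit v).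
Proof.
case: (tens_rep u) => su ->; case: (tens_rep v) => sv ->.
by rewrite tens_addE !runitE map_cat bsum_cat.
Qed.
End Unitors.

Lemma compE (T1 T2 T3 : Type) (f : T2 -> T3) (g : T1 -> T2) x : (f \o g) x = f (g x).
Proof. by []. Qed.

Section RewriteForms.
Variable A : pzRingType.
Local Notation bimod := (bimod A).

Lemma tmapD (X Y X' Y' : bimod) (f : X -> X') (g : Y -> Y') u v :
  is_rmap f -> is_lmap g -> tmap f g (badd u v) = badd (tmap f g u) (tmap f g v).
Proof. by move=> hf hg; apply: tmap_badditive. Qed.

Lemma tassocD (X Y Z : bimod) (HY : is_bimod Y) (u v : tens (tens X Y) Z) :
  tassoc (badd u v) = badd (tassoc u) (tassoc v).
Proof. exact: tassoc_badditive. Qed.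

Lemma tassocVD (X Y Z : bimod) (HY : is_bimod Y) (u v : tens X (tens Y Z)) :
  tassocV (badd u v) = badd (tassocV u) (tassocV v).
Proof. exact: tassocV_badditive. Qed.

Lemma blactDb (M : bimod) (HM : is_bimod M) a (x y : M) :
  blact a (badd x y) = badd (blact a x) (blact a y).
Proof. exact: blactD. Qed.

Lemma bractDb (M : bimod) (HM : is_bimod M) a (x y : M) :
  bract (badd x y) a = badd (bract x a) (bract y a).
Proof. exact: bractD. Qed.
End RewriteForms.

Create HintDb tens.
#[export] Hint Resolve tens_bimod Areg_bimod hom_rmap hom_lmap rmap_id lmap_id
  hom_id rmap_tpure lmap_tpure rmap_comp lmap_comp hom_comp tmap_hom
  lmap_tmap rmap_tmap : tens.

Ltac solve_map := solve [auto 12 with tens].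

Ltac simpl_comp := cbv beta; rewrite ?compE; cbv beta.

Ltac distribute_badd := first
  [ rewrite tmapD; [ | solve_map | solve_map]
  | rewrite tassocD; [ | solve_map ..]
  | rewrite tassocVD; [ | solve_map ..]
  | rewrite tpureDl
  | rewrite tpureDr
  | rewrite lunitD; [ | solve_map ..]
  | rewrite runitD; [ | solve_map ..]
  | rewrite blactDb; [ | solve_map ..]
  | rewrite bractDb; [ | solve_map ..]
  | match goal with |- context [?f (badd ?x ?y)] =>
      match goal with H : is_hom f |- _ => rewrite (hom_add H x y) end end ].

Ltac solve_badditive := let u := fresh "u" in let v := fresh "v" in
  move=> u v; simpl_comp; repeat distribute_badd; reflexivity.

Ltac push_tpure := first
  [ rewrite tmap_tpure; [ | solve_map | solve_map]
  | rewrite tassoc_tpure2; [ | solve_map ..]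
  | rewrite tassocV_tpure2; [ | solve_map ..]
  | rewrite lunit_tpure; [ | solve_map ..]
  | rewrite runit_tpure; [ | solve_map ..]
  | rewrite bract_tpure; [ | solve_map ..]
  | rewrite blact_tpure; [ | solve_map ..] ].

Ltac simpl_tpure := simpl_comp; repeat (push_tpure; simpl_comp).

(* Reduces an equation between additive maps on a tensor product to pure
   tensors [tpure x y]. *)
Ltac tens_elim := apply: tens_ext; [ solve_map | solve_badditive | solve_badditive | ].

Section StructureMapHoms.
Variable A : pzRingType.
Variables (X Y Z : bimod A) (HX : is_bimod X) (HY : is_bimod Y) (HZ : is_bimod Z).

Lemma hom_tassoc : is_hom (@tassoc _ X Y Z).
Proof.
split.
- exact: tassoc_badditive.
- move=> a; tens_elim => w z.
  rewrite blact_tpure; last solve_map.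
  by rewrite !tassoc_tpure //; apply: tmap_blact => //; solve_map.
- move=> u a; move: u; tens_elim => w z.
  rewrite bract_tpure // !tassoc_tpure //.
  by move: w; tens_elim => x y; simpl_tpure.
Qed.

Lemma hom_tassocV : is_hom (@tassocV _ X Y Z).
Proof.
split.
- exact: tassocV_badditive.
- move=> a u; move: u; tens_elim => x w.
  rewrite blact_tpure // !tassocV_tpure //.
  by move: w; tens_elim => y z; simpl_tpure.
- move=> u a; move: u; tens_elim => x w.
  rewrite bract_tpure; last solve_map.
  by rewrite !tassocV_tpure //; apply: tmap_bract => //; solve_map.
Qed.

Lemma hom_lunit : is_hom (@lunit _ X).
Proof.
split.
- exact: lunitD.
- by move=> a u; move: u; tens_elim => c v; simpl_tpure; exact: blactM.
- by move=> u a; move: u; tens_elim => c v; simpl_tpure; exact: esym (blract _ _ _ _).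
Qed.

Lemma hom_runit : is_hom (@runit _ X).
Proof.
split.
- exact: runitD.
- by move=> a u; move: u; tens_elim => c v; simpl_tpure; exact: blract.
- by move=> u a; move: u; tens_elim => c v; simpl_tpure; exact: bractM.
Qed.
End StructureMapHoms.

#[export] Hint Resolve hom_tassoc hom_tassocV hom_lunit hom_runit : tens.

Section Coherence.
Variable A : pzRingType.
Local Notation bimod := (bimod A).
Variables (X Y Z : bimod) (HX : is_bimod X) (HY : is_bimod Y) (HZ : is_bimod Z).

Lemma tassocVK (w : tens (tens X Y) Z) : tassocV (tassoc w) = w.
Proof. by move: w; tens_elim => u z; move: u; tens_elim => x y; simpl_tpure. Qed.

Lemma tassocK (w : tens X (tens Y Z)) : tassoc (tassocV w) = w.
Proof. by move: w; tens_elim => x v; move: v; tens_elim => y z; simpl_tpure. Qed.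

Lemma tmapl_tassoc (X' : bimod) (HX' : is_bimod X') (f : X -> X')
    (w : tens (tens X Y) Z) :
  is_hom f -> tmap f id (tassoc w) = tassoc (tmap (tmap f id) id w).
Proof.
by move=> hf; move: w; tens_elim => u z; move: u; tens_elim => x y; simpl_tpure.
Qed.

Lemma tmapr_tassocV (Z' : bimod) (HZ' : is_bimod Z') (h : Z -> Z')
    (w : tens X (tens Y Z)) :
  is_hom h -> tmap id h (tassocV w) = tassocV (tmap id (tmap id h) w).
Proof.
by move=> hh; move: w; tens_elim => x v; move: v; tens_elim => y z; simpl_tpure.
Qed.

Lemma lunit_tassoc (e : X -> Areg A) (w : tens (tens X Y) Z) :
  is_hom e -> lunit (tmap e id (tassoc w)) = tmap (@lunit _ _ \o tmap e id) id w.
Proof.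
by move=> he; move: w; tens_elim => u z; move: u; tens_elim => x y; simpl_tpure.
Qed.

Lemma runit_tassocV (e : Z -> Areg A) (w : tens X (tens Y Z)) :
  is_hom e -> runit (tmap id e (tassocV w)) = tmap id (@runit _ _ \o tmap id e) w.
Proof.
by move=> he; move: w; tens_elim => x v; move: v; tens_elim => y z; simpl_tpure.
Qed.

Lemma tassoc_triangle (e : Y -> Areg A) (w : tens (tens X Y) Z) :
  is_hom e ->
  tmap id (@lunit _ _ \o tmap e id) (tassoc w) = tmap (@runit _ _ \o tmap id e) id w.
Proof.
move=> he; move: w; tens_elim => u z; move: u; tens_elim => x y; simpl_tpure.
by rewrite tpure_bal.
Qed.

(* Maps acting on disjoint groups of factors of [X ⊗ Y ⊗ Z ⊗ V] commute. *)
Lemma tmap_interchange (V V' Z' P1 P2 : bimod) (HV : is_bimod V)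
    (HV' : is_bimod V') (HZ' : is_bimod Z') (HP1 : is_bimod P1)
    (HP2 : is_bimod P2) (f : tens X Y -> tens P1 P2) (g : tens Z V -> tens V' Z')
    (w : tens X (tens Y (tens Z V))) :
  is_hom f -> is_hom g ->
  tmap (@tassoc _ _ _ _ \o (tmap f id \o @tassocV _ _ _ _)) id
    (tassocV (tmap id (@tassocV _ _ _ _) (tmap id (tmap id g) w))) =
  tassocV (tmap id (@tassocV _ _ _ _) (tassoc (tmap id g (tmap f id (tassocV w))))).
Proof.
move=> hf hg; move: w; tens_elim => x w1; move: w1; tens_elim => y w2.
move: w2; tens_elim => z v; simpl_tpure.
move: (g (tpure z v)); tens_elim => v' z'; simpl_tpure.
by move: (f (tpure x y)); tens_elim => p1 p2; simpl_tpure.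
Qed.
End Coherence.

Section CowreathCoring.
Variable A : pzRingType.
Variables (C : bimod A) (D : C -> tens C C) (e : C -> Areg A) (M : bimod A).
Variables (m : tens C M -> tens M C) (xi : tens C M -> C).
Variable delta : tens C M -> tens C (tens M M).
Hypothesis Hc : is_coring D e.
Hypothesis Hw : is_cowreath D e m xi delta.

Let HC := coring_bimod Hc.
Let HM := robj_bimod (cw_Robj Hw).
Let hD := coring_Dhom Hc.
Let he := coring_ehom Hc.
Let hm := robj_hom (cw_Robj Hw).
Let hxi := cw_xi_hom Hw.
Let hdelta := cw_delta_hom Hw.
Local Hint Resolve HC HM hD he hm hxi hdelta : tens.
Local Notation aV := (@tassocV A _ _ _).
Local Notation aa := (@tassoc A _ _ _).
Local Notation D' := (cw_comul D m delta).

Lemma hom_rco : is_hom (rco D m).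
Proof.
have h : is_hom (aV \o (tmap id m \o (aa \o tmap D id)) : tens C M -> _).
  by solve_map.
exact: h.
Qed.
Local Hint Resolve hom_rco : tens.

(* [(C ⊗ m ⊗ M)(Δ ⊗ M ⊗ M)], through which [Δ'] factors after [δ] by left
   colinearity of [δ]. *)
Definition comul_twist (y : tens C (tens M M)) : tens C (tens M (tens C M)) :=
  tmap id aa (tmap id (tmap m id) (tmap id aV (tassoc (tmap D id y)))).

Lemma hom_comul_twist : is_hom comul_twist.
Proof.
have h : is_hom (tmap id aa \o (tmap id (tmap m id) \o (tmap id aV \o
  (aa \o tmap D id))) : tens C (tens M M) -> _) by solve_map.
exact: h.
Qed.
Local Hint Resolve hom_comul_twist : tens.

Lemma hom_cw_comul : is_hom D'.
Proof.
have h : is_hom (aV \o (tmap id aa \o (tmap id (tmap m id) \o (tmap id aV \o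
   (tmap id delta \o (aa \o tmap D id))))) : tens C M -> _) by solve_map.
exact: h.
Qed.
Local Hint Resolve hom_cw_comul : tens.

Lemma cw_comulE x : D' x = tassocV (comul_twist (delta x)).
Proof. by rewrite /cw_comul /comul_twist (cw_delta_lcolin Hw x). Qed.

Lemma comul_twist_rco y :
  tassocV (comul_twist y) = tassoc (tmap (rco D m) id (tassocV y)).
Proof.
rewrite /comul_twist; move: y; tens_elim => c w; move: w; tens_elim => a b.
rewrite /rco; simpl_tpure.
move: (D c); tens_elim => c1 c2; simpl_tpure.
by move: (m (tpure c2 a)); tens_elim => a' c'; simpl_tpure.
Qed.

Ltac tmap_compr_all := repeat (rewrite tmap_compr; [ | solve_map | solve_map]).
Ltac tmap_compl_all := repeat (rewrite tmap_compl; [ | solve_map | solve_map]).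

Lemma cw_comul_xir x : tmap id xi (D' x) = rco D m x.
Proof.
rewrite /cw_comul tmapr_tassocV; try solve_map.
tmap_compr_all; rewrite /rco; congr tassocV; apply: tmap_extr => v.
by rewrite !compE (cw_counitr Hw v).
Qed.

Lemma cw_comul_xil x : tmap xi id (D' x) = tassoc (tmap D id x).
Proof.
rewrite cw_comulE comul_twist_rco tmapl_tassoc; try solve_map.
tmap_compl_all.
transitivity (tassoc (tmap (D \o xi) id (tassocV (delta x)))).
  by congr tassoc; apply: tmap_extl => v; rewrite !compE (cw_xi_rcolin Hw v).
by rewrite -tmap_compl ?(cw_counitl Hw x); try solve_map.
Qed.

Lemma cw_comul_counitl x : lunit (tmap (cw_counit e xi) id (D' x)) = x.
Proof.
rewrite (@tmap_extl _ _ _ _ _ _ (e \o xi)) // -tmap_compl; try solve_map.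
rewrite cw_comul_xil lunit_tassoc; try solve_map.
tmap_compl_all.
rewrite (@tmap_extl _ _ _ _ _ _ id) ?tmap_id // => v.
by rewrite !compE (coring_counitl Hc v).
Qed.

Lemma cw_comul_counitr x : runit (tmap id (cw_counit e xi) (D' x)) = x.
Proof.
rewrite (@tmap_extr _ _ _ _ _ _ _ (e \o xi)) // -tmap_compr; try solve_map.
rewrite cw_comul_xir /rco runit_tassocV; try solve_map.
tmap_compr_all.
rewrite (@tmap_extr _ _ _ _ _ _ _ (@lunit _ _ \o tmap e id)); last first.
  by move=> v; rewrite !compE (robj_counit (cw_Robj Hw) v).
rewrite tassoc_triangle; try solve_map.
tmap_compl_all.
rewrite (@tmap_extl _ _ _ _ _ _ id) ?tmap_id // => v.
by rewrite !compE (coring_counitr Hc v).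
Qed.

Lemma cw_xi_comul x : tmap xi xi (D' x) = D (xi x).
Proof. by rewrite tmap_split ?cw_comul_xir ?(cw_xi_rcolin Hw x); try solve_map. Qed.

Definition delta_twice (v : tens C M) : tens (tens C (tens M M)) M :=
  tmap delta id (aV (delta v)).

Lemma hom_delta_twice : is_hom delta_twice.
Proof.
have h : is_hom (tmap delta id \o (aV \o delta) : tens C M -> _) by solve_map.
exact: h.
Qed.
Local Hint Resolve hom_delta_twice : tens.

Lemma hom_rco2 : is_hom (rco2 D m).
Proof.
have h : is_hom (aV \o (tmap id aV \o (tmap id (tmap id m) \o (tmap id aa \o
  (tmap id (tmap m id) \o (tmap id aV \o (aa \o tmap D id)))))) :
  tens C (tens M M) -> _) by solve_map.
exact: h.
Qed.
Local Hint Resolve hom_rco2 : tens.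

(* The maps applied to [delta_twice x] in the normal forms of the two sides
   of coassociativity of [Δ']. *)
Definition twist_after_rco2 :
    tens C (tens M M) -> tens (tens (tens C M) (tens C M)) C :=
  tmap (aV \o comul_twist) id \o rco2 D m.

Definition twist_after_m (w : tens (tens C (tens M M)) M) :
    tens M (tens (tens C M) (tens C M)) :=
  tmap id (aV \o comul_twist) (aa (tmap m id (aV (tmap id aa (aa w))))).

Lemma hom_twist_after_rco2 : is_hom twist_after_rco2.
Proof. by rewrite /twist_after_rco2; solve_map. Qed.
Local Hint Resolve hom_twist_after_rco2 : tens.

Lemma hom_twist_after_m : is_hom twist_after_m.
Proof.
have h : is_hom (tmap id (aV \o comul_twist) \o (aa \o (tmap m id \o
  (aV \o (tmap id aa \o aa)))) : tens (tens C (tens M M)) M -> _) by solve_map.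
exact: h.
Qed.
Local Hint Resolve hom_twist_after_m : tens.

Lemma tmap_tassocV_lco (f : tens C M -> tens C (tens M M)) (y : tens C (tens M M)) :
  is_hom f ->
  tmap id (tmap f id \o aV) (aa (tmap D id y)) =
  aa (tmap (tmap id f \o (aa \o tmap D id)) id (aV y)).
Proof.
move=> hf; move: y; tens_elim => c w; move: w; tens_elim => a b; simpl_tpure.
by move: (D c); tens_elim => c1 c2; simpl_tpure.
Qed.

Lemma cw_comul_coassoc_l x :
  aa (tmap D' id (D' x)) = aa (aa (tmap twist_after_rco2 id (delta_twice x))).
Proof.
rewrite cw_comulE comul_twist_rco tmapl_tassoc; try solve_map.
tmap_compl_all.
rewrite (@tmap_extl _ _ _ _ _ _ (twist_after_rco2 \o delta)); last first.
  move=> v; rewrite !compE.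
  rewrite (@tmap_extl _ _ _ _ _ _ ((aV \o comul_twist) \o delta)); last first.
    by move=> z; rewrite cw_comulE.
  by rewrite -tmap_compl ?(cw_delta_rcolin Hw v); try solve_map.
by rewrite -tmap_compl; try solve_map.
Qed.

Lemma cw_comul_coassoc_r x :
  tmap id D' (D' x) =
  aV (tmap id twist_after_m (aa (tmap (aa \o tmap D id) id (delta_twice x)))).
Proof.
rewrite [D' x]/cw_comul tmapr_tassocV; try solve_map.
tmap_compr_all.
rewrite (@tmap_extr _ _ _ _ _ _ _ (twist_after_m \o delta_twice)); last first.
  move=> v; rewrite !compE.
  rewrite (@tmap_extr _ _ _ _ _ _ _ ((aV \o comul_twist) \o delta)); last first.
    by move=> z; rewrite cw_comulE.
  rewrite -tmap_compr; try solve_map.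
  by rewrite -(cw_coassoc Hw v).
rewrite -tmap_compr; try solve_map.
rewrite (@tmap_extr _ _ _ _ _ _ _ ((tmap delta id \o aV) \o delta)) //.
rewrite -tmap_compr; try solve_map.
rewrite (cw_delta_lcolin Hw x) tmap_tassocV_lco; try solve_map.
rewrite (@tmap_extl _ _ _ _ _ _ ((aa \o tmap D id) \o delta)); last first.
  by move=> v; rewrite !compE (cw_delta_lcolin Hw v).
by rewrite -tmap_compl; try solve_map.
Qed.

Definition twist_after_rco2_nf :
    tens C (tens M M) -> tens (tens (tens C M) (tens C M)) C :=
  aV \o (tmap id aV \o (aa \o (tmap id m \o (tmap (rco D m) id \o
  (aV \o comul_twist))))).

Lemma hom_twist_after_rco2_nf : is_hom twist_after_rco2_nf.
Proof. by rewrite /twist_after_rco2_nf; solve_map. Qed.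
Local Hint Resolve hom_twist_after_rco2_nf : tens.

Lemma twist_after_rco2E y : twist_after_rco2 y = twist_after_rco2_nf y.
Proof.
rewrite /twist_after_rco2 /twist_after_rco2_nf /rco2 !compE.
rewrite (@tmap_extl _ _ _ _ _ _ (aa \o (tmap (rco D m) id \o aV))); last first.
  by move=> z; rewrite !compE comul_twist_rco.
by rewrite tmap_interchange; try solve_map.
Qed.

(* The same maps with the [M ⊗ M]-input fixed to [b ⊗ d] or [a ⊗ b ⊗ d],
   as functions of the [C ⊗ C]-part produced by [Δ]. *)
Definition comul_twist_at (b d : M) : tens C C -> tens (tens C M) (tens C M) :=
  aV \o (tmap id aa \o (tmap id (tmap m id) \o (tmap id aV \o
  (aa \o (fun u => tpure u (tpure b d)))))).

Lemma lmap_comul_twist_at b d : is_lmap (comul_twist_at b d).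
Proof. by rewrite /comul_twist_at; solve_map. Qed.
Local Hint Resolve lmap_comul_twist_at : tens.

Definition twist_after_m_at (a b d : M) :
    tens C C -> tens M (tens (tens C M) (tens C M)) :=
  tmap id (comul_twist_at b d) \o (aa \o (tmap m id \o (aV \o (tmap id m \o
  (aa \o (fun u => tpure u a)))))).

Lemma lmap_twist_after_m_at a b d : is_lmap (twist_after_m_at a b d).
Proof. by rewrite /twist_after_m_at; solve_map. Qed.
Local Hint Resolve lmap_twist_after_m_at : tens.

Lemma twist_after_m_tpure c a b d :
  twist_after_m (tpure (tpure c (tpure a b)) d) = twist_after_m_at a b d (D c).
Proof.
rewrite /twist_after_m; simpl_tpure.
rewrite tassoc_tpure; try solve_map.
rewrite tmap_compr; try solve_map.
rewrite (@tmap_extr _ _ _ _ _ _ _ (comul_twist_at b d \o D)); last first.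
  by move=> c'; rewrite !compE /comul_twist /comul_twist_at; simpl_tpure.
rewrite -tmap_compr; try solve_map.
by rewrite (robj_comul (cw_Robj Hw)) /twist_after_m_at; simpl_tpure.
Qed.

Definition rco_tail : tens (tens C C) M -> tens (tens C M) C :=
  aV \o (tmap id m \o aa).

Lemma hom_rco_tail : is_hom rco_tail.
Proof. by rewrite /rco_tail; solve_map. Qed.
Local Hint Resolve hom_rco_tail : tens.

Definition twist_after_rco2_at (a b d : M) :
    tens C (tens C C) -> tens (tens C M) (tens (tens C M) (tens C M)) :=
  aa \o (aa \o ((fun z => tpure z d) \o (aV \o (tmap id aV \o (aa \o
  (tmap id m \o (tmap rco_tail id \o (aV \o (tmap id aa \o (tmap id (tmap m id)
  \o (tmap id aV \o (aa \o ((fun v => tpure v (tpure a b)) \o aV))))))))))))).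

Ltac simpl_tpure_assoc := simpl_tpure;
  repeat (first [rewrite tassocVK; [|solve_map..] | rewrite tassocK; [|solve_map..]];
          simpl_tpure).

Ltac elim_structure_map := match goal with
  | |- context [m ?x] => move: (m x); tens_elim => ? ?; simpl_tpure_assoc
  | |- context [D ?x] => move: (D x); tens_elim => ? ?; simpl_tpure_assoc
  end.

Lemma twist_after_rco2_atE a b d u :
  twist_after_rco2_at a b d u = aV (tmap id (twist_after_m_at a b d) u).
Proof.
rewrite /twist_after_rco2_at /twist_after_m_at /rco_tail /comul_twist_at.
move: u; tens_elim => c1 w; move: w; tens_elim => c2 c3; simpl_tpure_assoc.
by repeat elim_structure_map.
Qed.

(* On [c ⊗ (a ⊗ b) ⊗ d] the left side uses [(Δ ⊗ C) Δ c] and the right side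
   [(C ⊗ Δ) Δ c], the latter after rewriting [(M ⊗ Δ) m] by the
   comultiplicativity of [m]. *)
Lemma coassoc_normal_forms w :
  aa (aa (tmap twist_after_rco2 id w)) =
  aV (tmap id twist_after_m (aa (tmap (aa \o tmap D id) id w))).
Proof.
rewrite (@tmap_extl _ _ _ _ _ _ twist_after_rco2_nf); last exact: twist_after_rco2E.
move: w; tens_elim => y d; move: y; tens_elim => c v; move: v; tens_elim => a b.
rewrite /twist_after_rco2_nf /comul_twist; simpl_tpure.
have -> : aV (tmap id twist_after_m (aa (tpure (aa (tpure (D c) (tpure a b))) d))) =
    aV (tmap id (twist_after_m_at a b d \o D) (D c)).
  by move: (D c); tens_elim => c1 c2; simpl_tpure; rewrite twist_after_m_tpure.
rewrite -tmap_compr; try solve_map.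
rewrite -(coring_coassoc Hc c) -twist_after_rco2_atE /twist_after_rco2_at /rco_tail /rco.
move: (D c); tens_elim => c1 c2; simpl_tpure_assoc.
by repeat elim_structure_map.
Qed.

Lemma cw_comul_coassoc x : tassoc (tmap D' id (D' x)) = tmap id D' (D' x).
Proof. by rewrite cw_comul_coassoc_l cw_comul_coassoc_r coassoc_normal_forms. Qed.
End CowreathCoring.

Unset Implicit Arguments.
Theorem proposition3p3 (A : pzRingType) (C : bimod A) (D : C -> tens C C)
    (e : C -> Areg A) (M : bimod A) (m : tens C M -> tens M C)
    (xi : tens C M -> C) (delta : tens C M -> tens C (tens M M)) :
  is_coring D e ->
  is_cowreath D e m xi delta ->
  is_coring (cw_comul D m delta) (cw_counit e xi) /\
  is_coring_hom (cw_comul D m delta) (cw_counit e xi) D e xi.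
Proof.
move=> Hc Hw; split; split.
- exact: tens_bimod (coring_bimod Hc) (robj_bimod (cw_Robj Hw)).
- exact: hom_cw_comul Hc Hw.
- exact: hom_comp (cw_xi_hom Hw) (coring_ehom Hc).
- exact: cw_comul_coassoc Hc Hw.
- exact: cw_comul_counitl Hc Hw.
- exact: cw_comul_counitr Hc Hw.
- exact: cw_xi_hom Hw.
- by [].
- exact: cw_xi_comul Hc Hw.
Qed.
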